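(* Let $k$ be a field, let $A$ be a $k$-algebra and let $K/k$ be a field extension. If $A\otimes_k K$ is just infinite over $K$, then $A$ is just infinite over $k$.
   Context: All rings are associative unital algebras over a field. A $k$-algebra $A$ is called just infinite if $\dim_k(A)=\infty$ and every nonzero two-sided ideal of $A$ has finite codimension in $A$. *)

From HB Require Import structures.
From mathcomp Require Import all_boot all_order all_algebra.
Set Implicit Arguments. Unset Strict Implicit. Unset Printing Implicit Defensive.
Import GRing.Theory.
Local Open Scope ring_scope.

Section LinearNotions.
Variables (R : fieldType) (V : lmodType R).

Definition spans (s : seq V) : Prop :=
  forall v : V, exists c : 'I_(size s) -> R, v = \sum_(i < size s) c i *: s`_i.

Definition findim : Prop := exists s : seq V, spans s.

Definition lin_indep (s : seq V) : Prop :=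
  forall c : 'I_(size s) -> R,
    \sum_(i < size s) c i *: s`_i = 0 -> forall i, c i = 0.
End LinearNotions.

Section Ideals.
Variables (R : fieldType) (A : algType R).

Definition two_sided_ideal (I : A -> Prop) : Prop :=
  [/\ I 0, (forall x y, I x -> I y -> I (x + y)),
      (forall a x, I x -> I (a * x)) & (forall a x, I x -> I (x * a))].

(* I has finite codimension in A: A/I is spanned by finitely many classes *)
Definition finite_codim (I : A -> Prop) : Prop :=
  exists s : seq A, forall a : A,
    exists c : 'I_(size s) -> R, I (a - \sum_(i < size s) c i *: s`_i).

Definition just_infinite : Prop :=
  ~ findim A /\
  forall I : A -> Prop, two_sided_ideal I -> (exists x, I x /\ x != 0) ->
    finite_codim I.
End Ideals.

(* (B, f) is the scalar extension A (x)_k K, where K is a field extension of k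
   via iota: f : A -> B is a k-algebra map (B viewed as k-algebra via iota)
   such that the induced K-linear map A (x)_k K -> B, a (x) c |-> c f(a),
   is bijective: surjective (the f(a) span B over K) and injective
   (k-linearly independent families go to K-linearly independent families). *)
Definition is_scalar_extension (k K : fieldType) (iota : {rmorphism k -> K})
    (A : algType k) (B : algType K) (f : A -> B) : Prop :=
  [/\ f 1 = 1,
      (forall x y, f (x * y) = f x * f y),
      (forall x y, f (x + y) = f x + f y)
    & (forall (c : k) x, f (c *: x) = iota c *: f x)] /\
  (forall b : B, exists s : seq A,
          exists c : 'I_(size s) -> K, b = \sum_(i < size s) c i *: f s`_i) /\
  (forall s : seq A, lin_indep s -> lin_indep (map f s)).

From HB Require Import structures.
From mathcomp Require Import all_boot all_order all_algebra.
From Stdlib Require Import Classical.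
Set Implicit Arguments. Unset Strict Implicit. Unset Printing Implicit Defensive.
Import GRing.Theory.
Local Open Scope ring_scope.

(* Let B = A (x)_k K and let I be a nonzero ideal of A. The K-span J of f(I) is a
   nonzero ideal of B, so B = span_K f(S) + J for a finite S in A. If a is in A,
   then f(a) lies in the K-span of f(S ++ y) for finitely many y in I; since f maps
   k-independent families to K-independent ones, a already lies in the k-span of
   S ++ y, i.e. a is in span_k S + I. Likewise, a finite k-spanning family of A
   maps to a finite K-spanning family of B, so A is infinite dimensional. *)

Section Span.
Variables (R : fieldType) (V : lmodType R).

Definition in_span (s : seq V) (v : V) : Prop :=
  exists c : nat -> R, v = \sum_(i < size s) c i *: s`_i.

Lemma in_spanP s v :
  in_span s v <-> exists c : 'I_(size s) -> R, v = \sum_(i < size s) c i *: s`_i.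
Proof.
split=> [[c ->] | [c ->]]; first by exists (fun i => c i).
exists (fun n => oapp c 0 (insub n)).
by apply: eq_bigr => i _; rewrite valK.
Qed.

Lemma spansP s : spans s <-> forall v, in_span s v.
Proof. by split=> h v; apply/in_spanP. Qed.

Lemma in_span0 s : in_span s 0.
Proof. by exists (fun _ => 0); rewrite big1 // => i _; rewrite scale0r. Qed.

Lemma in_spanD s v w : in_span s v -> in_span s w -> in_span s (v + w).
Proof.
case=> c -> [d ->]; exists (fun n => c n + d n).
by rewrite -big_split; apply: eq_bigr => i _; rewrite scalerDl.
Qed.

Lemma in_spanZ s a v : in_span s v -> in_span s (a *: v).
Proof.
case=> c ->; exists (fun n => a * c n).
by rewrite scaler_sumr; apply: eq_bigr => i _; rewrite scalerA.
Qed.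

Lemma in_span_sum s n (F : 'I_n -> V) :
  (forall i, in_span s (F i)) -> in_span s (\sum_(i < n) F i).
Proof.
elim: n F => [|n IHn] F spanF; first by rewrite big_ord0; apply: in_span0.
by rewrite big_ord_recr; apply: in_spanD; [apply: IHn|].
Qed.

Lemma in_span_cons x s v :
  in_span (x :: s) v <-> exists a w, in_span s w /\ v = a *: x + w.
Proof.
split=> [[c ->] | [a [w [[c ->] ->]]]].
  exists (c 0%N), (\sum_(i < size s) c i.+1 *: s`_i).
  by split; [exists (fun n => c n.+1) | rewrite big_ord_recl].
by exists (fun n => if n is n'.+1 then c n' else a); rewrite big_ord_recl.
Qed.

Lemma mem_in_span s x : x \in s -> in_span s x.
Proof.
elim: s => // y s IHs; rewrite inE => /predU1P [-> | sx]; apply/in_span_cons.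
  by exists 1, 0; rewrite scale1r addr0; split; first apply: in_span0.
by exists 0, x; rewrite scale0r add0r; split; first apply: IHs.
Qed.

End Span.

Lemma in_span_semilinear (R S : fieldType) (V : lmodType R) (W : lmodType S)
    (sigma : R -> S) (g : V -> W) (s : seq V) (t : seq W) (v : V) :
  (forall x y, g (x + y) = g x + g y) -> (forall c x, g (c *: x) = sigma c *: g x) ->
  (forall x, x \in s -> in_span t (g x)) -> in_span s v -> in_span t (g v).
Proof.
move=> gD gZ gs [c ->].
have g0 : g 0 = 0 by apply: (addrI (g 0)); rewrite -gD !addr0.
rewrite (big_morph g gD g0); apply: in_span_sum => i; rewrite gZ; apply: in_spanZ.
exact/gs/mem_nth.
Qed.

Section SpanBasis.
Variables (R : fieldType) (V : lmodType R).

Lemma in_span_trans (s t : seq V) (v : V) :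
  (forall x, x \in s -> in_span t x) -> in_span s v -> in_span t v.
Proof. exact: (@in_span_semilinear R R V V id id). Qed.

Lemma in_span_subset (s t : seq V) (v : V) : {subset s <= t} -> in_span s v -> in_span t v.
Proof. by move=> st; apply: in_span_trans => x /st /mem_in_span. Qed.

Lemma in_span_cat (s1 s2 : seq V) (v : V) :
  in_span (s1 ++ s2) v <->
  exists v1 v2, [/\ in_span s1 v1, in_span s2 v2 & v = v1 + v2].
Proof.
split=> [|[v1 [v2 [span1 span2 ->]]]]; last first.
  apply: in_spanD; [apply: in_span_subset span1 | apply: in_span_subset span2];
  by move=> x; rewrite mem_cat => ->; rewrite ?orbT.
elim: s1 v => [|x s1 IHs1] v /=.
  by exists 0, v; rewrite add0r; split; first apply: in_span0.
move/in_span_cons => [a [w [/IHs1 [v1 [v2 [span1 span2 ->]]] ->]]].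
exists (a *: x + v1), v2; rewrite addrA; split=> //.
by apply/in_span_cons; exists a, v1.
Qed.

Lemma lin_indep_cons (x : V) s : lin_indep s -> ~ in_span s x -> lin_indep (x :: s).
Proof.
move=> indep_s x_notin c; rewrite big_ord_recl /= => sum0.
have c0 : c ord0 = 0.
  have [//|c0_neq0] := eqVneq (c ord0) 0; case: x_notin; apply/in_spanP.
  exists (fun i => - (c ord0)^-1 * c (lift ord0 i)).
  have cx : c ord0 *: x = - \sum_(i < size s) c (lift ord0 i) *: s`_i.
    by apply/eqP; rewrite -addr_eq0; apply/eqP.
  rewrite -[x](scalerK c0_neq0) cx scalerN scaler_sumr -sumrN.
  by apply: eq_bigr => i _; rewrite scalerA mulNr scaleNr.
have /indep_s c_lift : \sum_(i < size s) c (lift ord0 i) *: s`_i = 0.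
  by move: sum0; rewrite c0 scale0r add0r.
by move=> i; case: (unliftP ord0 i) => [j ->|->].
Qed.

Lemma lin_indep_cons_not_in_span (x : V) s : lin_indep (x :: s) -> ~ in_span s x.
Proof.
move=> indep_xs [c x_sum].
pose d (i : 'I_(size (x :: s))) := if val i is n.+1 then c n else -1.
have sum0 : \sum_(i < size (x :: s)) d i *: (x :: s)`_i = 0.
  by rewrite big_ord_recl /= -x_sum scaleN1r addNr.
by have /eqP := indep_xs d sum0 ord0; rewrite oppr_eq0 oner_eq0.
Qed.

Lemma exists_lin_indep_same_span (s : seq V) : exists t, [/\ lin_indep t,
  forall x, x \in t -> in_span s x & forall x, x \in s -> in_span t x].
Proof.
elim: s => [|v s [t [indep_t ts st]]].
  by exists [::]; split=> // c _ [].
have sub_cons (y : V) u : {subset u <= y :: u} by move=> z uz; rewrite inE uz orbT.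
have [vt | v_notin] := classic (in_span t v).
  exists t; split=> // x; first by move/ts; apply: in_span_subset (sub_cons v s).
  by rewrite inE => /predU1P [-> | /st].
exists (v :: t); split; first exact: lin_indep_cons.
  move=> x; rewrite inE => /predU1P [-> | /ts]; last exact: in_span_subset (sub_cons v s).
  exact/mem_in_span/mem_head.
move=> x; rewrite inE => /predU1P [-> | /st]; last exact: in_span_subset (sub_cons v t).
exact/mem_in_span/mem_head.
Qed.

End SpanBasis.

Lemma in_span_mul (R : fieldType) (B : algType R) (s t : seq B) x y :
  in_span s x -> in_span t y -> in_span [seq u * w | u <- s, w <- t] (x * y).
Proof.
move=> sx ty.
apply: (@in_span_semilinear _ _ _ _ id (fun u => u * y)) sx => [u v|c u|u su].
- by rewrite mulrDl.
- by rewrite scalerAl.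
apply: (@in_span_semilinear _ _ _ _ id (fun w => u * w)) ty => [w v|c w|w tw].
- by rewrite mulrDr.
- by rewrite scalerAr.
exact/mem_in_span/allpairs_f.
Qed.

Lemma two_sided_ideal_in_span (R : fieldType) (A : algType R) (I : A -> Prop) s v :
  two_sided_ideal I -> (forall x, x \in s -> I x) -> in_span s v -> I v.
Proof.
move=> [I0 ID IL _] sI [c ->]; elim/big_ind: _ => // i _.
by rewrite -[s`_i]mul1r scalerAl; apply/IL/sI/mem_nth.
Qed.

Section ScalarExtension.
Variables (k K : fieldType) (iota : {rmorphism k -> K}).
Variables (A : algType k) (B : algType K) (f : A -> B).
Hypotheses (fM : forall x y, f (x * y) = f x * f y)
  (fD : forall x y, f (x + y) = f x + f y)
  (fZ : forall (c : k) x, f (c *: x) = iota c *: f x)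
  (f_span : forall b : B, exists s : seq A,
     exists c : 'I_(size s) -> K, b = \sum_(i < size s) c i *: f s`_i)
  (f_indep : forall s : seq A, lin_indep s -> lin_indep (map f s)).

Lemma in_span_map s a : in_span s a -> in_span (map f s) (f a).
Proof.
apply: in_span_semilinear fD fZ _ => x sx.
exact/mem_in_span/map_f.
Qed.

Lemma in_span_map_cover (t : seq B) :
  exists s, forall b, b \in t -> in_span (map f s) b.
Proof.
elim: t => [|b t [s span_s]]; first by exists [::].
have [s' [c b_sum]] := f_span b.
have sub_cat (u v : seq A) : {subset map f u <= map f (u ++ v)}.
  by move=> z; rewrite map_cat mem_cat => ->.
exists (s' ++ s) => x; rewrite inE => /predU1P [-> | /span_s].
  apply: in_span_subset (sub_cat _ _) _; apply/in_spanP; rewrite size_map.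
  by exists c; rewrite b_sum; apply: eq_bigr => i _; rewrite (nth_map 0).
by apply: in_span_subset => z; rewrite map_cat mem_cat orbC => ->.
Qed.

(* Reduce s to an independent family y with the same span: if a were outside
   span y, then a :: y would be independent while f(a) lies in span f(y). *)
Lemma in_span_map_reflect s a : in_span (map f s) (f a) -> in_span s a.
Proof.
move=> span_fa; have [y [indep_y ys sy]] := exists_lin_indep_same_span s.
have [ya | a_notin] := classic (in_span y a); first exact: in_span_trans ys ya.
case: (lin_indep_cons_not_in_span (f_indep (lin_indep_cons indep_y a_notin))).
apply: in_span_trans span_fa => _ /mapP [z sz ->].
exact/in_span_map/sy.
Qed.

Lemma map_neq0 x : x != 0 -> f x != 0.
Proof.
move=> x_neq0; apply/eqP => fx0.
have indep_x : lin_indep [:: x].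
  move=> c; rewrite big_ord1 => /eqP; rewrite scaler_eq0 (negbTE x_neq0) orbF.
  by move=> /eqP c0 i; rewrite (ord1 i).
have sum0 : \sum_(i < size (map f [:: x])) 1 *: (map f [:: x])`_i = 0.
  by rewrite big_ord1 scale1r /= fx0.
by have /eqP := f_indep indep_x sum0 ord0; rewrite oner_eq0.
Qed.

Lemma findim_map : findim A -> findim B.
Proof.
move=> [s /spansP span_s]; exists (map f s); apply/spansP => b.
have [t /(_ b (mem_head _ _)) span_b] := in_span_map_cover [:: b].
apply: in_span_trans span_b => _ /mapP [z _ ->].
exact: in_span_map.
Qed.

Definition ext_ideal (I : A -> Prop) (b : B) : Prop :=
  exists2 y, (forall z, z \in y -> I z) & in_span (map f y) b.

Variable I : A -> Prop.
Hypothesis I_ideal : two_sided_ideal I.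

Lemma ext_ideal_map x : I x -> ext_ideal I (f x).
Proof.
by move=> Ix; exists [:: x]; [move=> z /[!inE] /eqP -> | apply/mem_in_span/mem_head].
Qed.

Lemma ext_ideal_two_sided : two_sided_ideal (ext_ideal I).
Proof.
have [_ _ IL IR] := I_ideal.
have allpairs_mul_map (u v : seq A) :
    {subset [seq x * y | x <- map f u, y <- map f v] <= map f [seq x * y | x <- u, y <- v]}.
  move=> _ /allpairsP [[_ _] [/mapP [x ux ->] /mapP [y vy ->] ->]].
  by rewrite /= -fM; apply/map_f/allpairs_f.
split.
- by exists [::]; last apply: in_span0.
- move=> b1 b2 [y1 Iy1 span1] [y2 Iy2 span2].
  exists (y1 ++ y2); first by move=> z; rewrite mem_cat => /orP [/Iy1 | /Iy2].
  by rewrite map_cat; apply/in_span_cat; exists b1, b2.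
- move=> b v [y Iy span_v].
  have [s /(_ b (mem_head _ _)) span_b] := in_span_map_cover [:: b].
  exists [seq x * z | x <- s, z <- y].
    by move=> _ /allpairsP [[x z] [_ yz ->]]; apply/IL/Iy.
  exact: in_span_subset (allpairs_mul_map s y) (in_span_mul span_b span_v).
- move=> b v [y Iy span_v].
  have [s /(_ b (mem_head _ _)) span_b] := in_span_map_cover [:: b].
  exists [seq z * x | z <- y, x <- s].
    by move=> _ /allpairsP [[z x] [yz _ ->]]; apply/IR/Iy.
  exact: in_span_subset (allpairs_mul_map y s) (in_span_mul span_v span_b).
Qed.

Lemma finite_codim_ext_ideal : finite_codim (ext_ideal I) -> finite_codim I.
Proof.
move=> [t codim_t]; have [s span_t] := in_span_map_cover t.
exists s => a; have [c [y Iy span_rest]] := codim_t (f a).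
have /in_span_map_reflect /in_span_cat [v1 [v2 [/in_spanP [d ->] span_v2 a_eq]]] :
    in_span (map f (s ++ y)) (f a).
  rewrite map_cat; apply/in_span_cat.
  exists (\sum_(i < size t) c i *: t`_i), (f a - \sum_(i < size t) c i *: t`_i).
  split=> //; last by rewrite addrC subrK.
  by apply: in_span_sum => i; apply/in_spanZ/span_t/mem_nth.
exists d; rewrite a_eq addrC addKr.
exact: two_sided_ideal_in_span I_ideal Iy span_v2.
Qed.

End ScalarExtension.

Theorem lemma5p2 (k K : fieldType) (iota : {rmorphism k -> K})
    (A : algType k) (B : algType K) (f : A -> B) :
  is_scalar_extension iota f -> just_infinite B -> just_infinite A.
Proof.
move=> [[_ fM fD fZ] [f_span f_indep]] [infB codimB]; split.
  by move/(findim_map fD fZ f_span).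
move=> I I_ideal [x [Ix x_neq0]].
apply: (finite_codim_ext_ideal fD fZ f_span f_indep I_ideal).
apply: codimB; first exact: ext_ideal_two_sided.
by exists (f x); split; [apply: ext_ideal_map | apply: map_neq0].
Qed.
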